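(* Let $X$ be a topological space and let $(A_n)_{n\in\mathbb N}$ be subsets of $X$ (each with the subspace topology) such that $C(A_n)$ has the countable sup property for every $n$ and $\bigcup_{n=1}^\infty A_n$ is dense in $X$. Then $C(X)$ has the countable sup property.
   Context: $C(Y)$ denotes the vector lattice of all real-valued continuous functions on a space $Y$ with the pointwise order. A vector lattice has the countable sup property if every nonempty subset possessing a supremum contains a countable subset with the same supremum. *)

From HB Require Import structures.
From mathcomp Require Import all_boot all_order all_algebra.
From mathcomp Require Import all_classical all_reals all_analysis.
Set Implicit Arguments. Unset Strict Implicit. Unset Printing Implicit Defensive.
Import Order.TTheory GRing.Theory Num.Theory.
Import numFieldNormedType.Exports.
Local Open Scope classical_set_scope.
Local Open Scope ring_scope.

Definition subsp (X : topologicalType) (A : set X) : topologicalType :=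
  initial_topology (val : set_type A -> X).

Definition is_sup_C (R : realType) (Y : topologicalType)
    (S : set (Y -> R)) (s : Y -> R) : Prop :=
  continuous s /\
  (forall f, S f -> forall y, f y <= s y) /\
  (forall g : Y -> R, continuous g ->
     (forall f, S f -> forall y, f y <= g y) -> forall y, s y <= g y).

Definition countable_sup_prop (R : realType) (Y : topologicalType) : Prop :=
  forall (S : set (Y -> R)) (s : Y -> R),
    (forall f, S f -> continuous f) -> S !=set0 -> is_sup_C S s ->
    exists S' : set (Y -> R), S' `<=` S /\ countable S' /\ is_sup_C S' s.

From HB Require Import structures.
From mathcomp Require Import all_boot all_order all_algebra.
From mathcomp Require Import all_classical all_reals all_analysis.
From mathcomp Require Import lra.
Import Order.TTheory GRing.Theory Num.Theory.
Import numFieldNormedType.Exports.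
Local Open Scope classical_set_scope.
Local Open Scope ring_scope.

(* Fix [e > 0] and a piece [B = A n]. Call a continuous [f <= 1] on [B]
   decisive if on [{f > 0}] either one [h] in [S] stays above [s - e] or all
   of [S] stays below [s - e]. Bump functions show that the decisive
   functions have supremum 1 in C(B), so countably many of them do; pick a
   witness [h] for each one of the first kind. A continuous [g] above all
   witnesses leaves no point of [B] where [s - g > e] and some [h] in [S]
   exceeds [s - e]: the function [max 0 (1 - min (s - g - e) (h - s + e))]
   would bound the countable family yet drop below 1 there. That bad set is
   open, so by density it is empty, hence [max (s - e) (g + e)] bounds [S]
   and [s <= g + e]. Letting [e] run through [1 / (k + 1)] and [B] through
   the [A n] yields countably many witnesses with supremum [s]. *)

Section continuous_real_functions.
Context {R : realType} {T : topologicalType}.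
Implicit Types (f g : T -> R) (c : R).

Lemma continuous_cst c : continuous (fun _ : T => c).
Proof. by move=> x; apply: cst_continuous. Qed.

Lemma continuous_add f g :
  continuous f -> continuous g -> continuous (fun x => f x + g x).
Proof. by move=> cf cg x; have := @continuousD R R^o T f g x (cf x) (cg x). Qed.

Lemma continuous_sub f g :
  continuous f -> continuous g -> continuous (fun x => f x - g x).
Proof. by move=> cf cg x; have := @continuousB R R^o T f g x (cf x) (cg x). Qed.

Lemma continuous_mull c f : continuous f -> continuous (fun x => c * f x).
Proof.
by move=> cf x; have := @continuousM R T (fun=> c) f x (@cst_continuous T R c x) (cf x).
Qed.

Lemma continuous_minr f g :
  continuous f -> continuous g -> continuous (fun x => Num.min (f x) (g x)).
Proof. by move=> cf cg x; have := @continuous_min R T f g x (cf x) (cg x). Qed.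

Lemma continuous_maxr f g :
  continuous f -> continuous g -> continuous (fun x => Num.max (f x) (g x)).
Proof. by move=> cf cg x; have := @continuous_max R T f g x (cf x) (cg x). Qed.

Lemma open_gt0 f : continuous f -> open [set x | 0 < f x].
Proof. by move/continuousP => /(_ _ (@open_gt R 0)). Qed.

Lemma bump_at {f x} : continuous f -> 0 < f x ->
  exists b : T -> R,
    [/\ continuous b, forall y, b y <= 1, b x = 1 & forall y, 0 < b y -> 0 < f y].
Proof.
move=> cf fx_gt0.
exists (fun y => Num.min 1 ((f x)^-1 * Num.max 0 (f y))); split.
- apply: continuous_minr; first exact: continuous_cst.
  by apply/continuous_mull/continuous_maxr => //; apply: continuous_cst.
- by move=> y; rewrite ge_min lexx.
- by rewrite max_r ?ltW // mulVf ?gt_eqF // minxx.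
- move=> y; rewrite lt_min => /andP[_].
  by rewrite pmulr_rgt0 ?invr_gt0 // lt_max ltxx.
Qed.

End continuous_real_functions.

Lemma continuous_comp_val (R : realType) (X : topologicalType) (B : set X)
    (h : X -> R) :
  continuous h -> continuous (fun y : subsp B => h (val y)).
Proof.
by move=> ch y; apply: continuous_comp; [exact: initial_continuous|exact: ch].
Qed.

Lemma sup_le_addr {R : realType} {Y : topologicalType} {S : set (Y -> R)}
    {s g : Y -> R} {e : R} :
  is_sup_C S s -> continuous g -> 0 < e ->
  (forall h, S h -> forall y, e < s y - g y -> h y <= s y - e) ->
  forall y, s y <= g y + e.
Proof.
move=> [s_cont [s_ub s_least]] g_cont e_gt0 S_below y.
have u_ub h : S h -> forall z, h z <= Num.max (s z - e) (g z + e).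
  move=> Sh z; rewrite le_max; case: (ltP e (s z - g z)) => gap.
    by rewrite S_below.
  by apply/orP; right; have := s_ub h Sh z; lra.
have u_cont : continuous (fun z => Num.max (s z - e) (g z + e)).
  by apply: continuous_maxr; apply: continuous_add => //; apply: continuous_cst.
have := s_least _ u_cont u_ub y; rewrite le_max => /orP[|] //; lra.
Qed.

Lemma le_addSinv (R : realType) (x y : R) :
  (forall k : nat, x <= y + k.+1%:R^-1) -> x <= y.
Proof.
move=> x_le; apply/ler_addgt0Pr => e e_gt0.
have [k _ /(_ k (leqnn _)) ke] := near_infty_natSinv_lt (PosNum e_gt0).
by rewrite (le_trans (x_le k)) // lerD2l ltW.
Qed.

Section decisive.
Context {R : realType} {X : topologicalType}.
Variables (S : set (X -> R)) (s : X -> R).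
Hypotheses (S_cont : forall h, S h -> continuous h) (s_cont : continuous s).
Variables (B : set X) (e : R).

Definition near_sup_on (f : subsp B -> R) (h : X -> R) :=
  forall y, 0 < f y -> s (val y) - e < h (val y).

Definition decisive (f : subsp B -> R) :=
  [/\ continuous f, forall y, f y <= 1 &
      (exists2 h, S h & near_sup_on f h) \/
      (forall h, S h -> forall y, 0 < f y -> h (val y) <= s (val y) - e)].

Lemma decisive_cst0 : decisive (fun _ => 0).
Proof.
split; first exact: continuous_cst.
- by move=> y; rewrite ler01.
- by right=> h _ y; rewrite ltxx.
Qed.

Lemma is_sup_decisive : is_sup_C decisive (fun _ => 1).
Proof.
split; first exact: continuous_cst.
split; first by move=> f [].
move=> g g_cont g_ub.
have g_ge1 y : (exists2 h, S h & s (val y) - e < h (val y)) -> 1 <= g y.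
  move=> [h Sh hy].
  pose phi (z : subsp B) := h (val z) - s (val z) + e.
  have phi_cont : continuous phi.
    apply: continuous_add; last exact: continuous_cst.
    by apply: continuous_sub; apply: continuous_comp_val => //; apply: S_cont.
  have phi_y : 0 < phi y by rewrite /phi; lra.
  have [b [b_cont b_le1 <- b_pos]] := bump_at phi_cont phi_y.
  by apply: g_ub => //; split => //; left; exists h => // z /b_pos; rewrite /phi; lra.
move=> y; rewrite leNgt; apply/negP => gy_lt1.
have phi_cont : continuous (fun z => 1 - g z).
  by apply: continuous_sub => //; apply: continuous_cst.
have phi_y : 0 < 1 - g y by lra.
have [b [b_cont b_le1 by1 b_pos]] := bump_at phi_cont phi_y.
suff : 1 <= g y by lra.
rewrite -by1; apply: g_ub => //; split => //; right=> h Sh z /b_pos gz_lt1.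
by rewrite leNgt; apply/negP => hz; have := g_ge1 z (ex_intro2 _ _ h Sh hz); lra.
Qed.

Lemma decisive_separation {T : set (subsp B -> R)} {g : X -> R} :
  T `<=` decisive -> is_sup_C T (fun _ => 1) -> continuous g ->
  (forall f, T f -> (exists2 h, S h & near_sup_on f h) ->
     exists2 h, (forall x, h x <= g x) & near_sup_on f h) ->
  forall h, S h -> forall y : subsp B,
    e < s (val y) - g (val y) -> h (val y) <= s (val y) - e.
Proof.
move=> T_dec [_ [_ T_least]] g_cont T_wit h Sh y gap.
rewrite leNgt; apply/negP => hy.
pose p x := Num.min (s x - g x - e) (h x - s x + e).
have p_cont : continuous p.
  apply: continuous_minr; last apply: continuous_add.
  - by apply: continuous_sub; [apply: continuous_sub|apply: continuous_cst].
  - by apply: continuous_sub => //; apply: S_cont.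
  - exact: continuous_cst.
have T_vanish f : T f -> forall z, 0 < p (val z) -> f z <= 0.
  move=> Tf z; rewrite lt_min => /andP[gap_z hz]; rewrite leNgt; apply/negP => fz.
  have [_ _ [hf|below]] := T_dec f Tf.
  - have [h' h'_le /(_ z fz)] := T_wit f Tf hf.
    by have := h'_le (val z); lra.
  - by have := below h Sh z fz; lra.
pose G (z : subsp B) := Num.max 0 (1 - p (val z)).
have G_cont : continuous G.
  apply: continuous_maxr; first exact: continuous_cst.
  by apply: continuous_sub; [apply: continuous_cst|apply: continuous_comp_val].
have G_ub f : T f -> forall z, f z <= G z.
  move=> Tf z; rewrite le_max; case: (ltP 0 (p (val z))) => pz.
    by rewrite T_vanish.
  by have [_ f_le1 _] := T_dec f Tf; apply/orP; right; have := f_le1 z; lra.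
have py : 0 < p (val y) by rewrite lt_min; apply/andP; split; lra.
by have := T_least G G_cont G_ub y; rewrite le_max => /orP[|]; lra.
Qed.

Lemma decisive_countable_witnesses :
  countable_sup_prop R (subsp B) -> S !=set0 ->
  exists W : set (X -> R), [/\ W `<=` S, countable W &
    forall g, continuous g -> (forall h, W h -> forall x, h x <= g x) ->
    forall h, S h -> forall y : subsp B,
      e < s (val y) - g (val y) -> h (val y) <= s (val y) - e].
Proof.
move=> csp [h0 Sh0].
have [|||T [T_dec [T_count T_sup]]] := csp decisive (fun _ => 1).
- by move=> f [].
- by exists (fun _ => 0); apply: decisive_cst0.
- exact: is_sup_decisive.
have witness f : exists h, S h /\
    ((exists2 h, S h & near_sup_on f h) -> near_sup_on f h).
  case: (pselect (exists2 h, S h & near_sup_on f h)) => [[h Sh hf]|no_h].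
    by exists h; split => // _.
  by exists h0; split => // /no_h.
have [w w_spec] := choice witness.
exists (w @` T); split.
- by move=> _ [f _ <-]; case: (w_spec f).
- exact: sub_countable (card_image_le _ _) T_count.
- move=> g g_cont g_ub; apply: (decisive_separation T_dec T_sup g_cont).
  move=> f Tf hf; exists (w f); first by apply: g_ub; exists f.
  by apply: (w_spec f).2.
Qed.

End decisive.

Lemma separation_of_dense {R : realType} {X : topologicalType} {D : set X}
    {s g h : X -> R} {e : R} :
  dense D -> continuous s -> continuous g -> continuous h ->
  (forall x, D x -> e < s x - g x -> h x <= s x - e) ->
  forall x, e < s x - g x -> h x <= s x - e.
Proof.
move=> D_dense s_cont g_cont h_cont D_sep x gap; rewrite leNgt; apply/negP => hx.
pose O := [set z | 0 < s z - g z - e] `&` [set z | 0 < h z - s z + e].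
have O_open : open O.
  apply: openI; apply: open_gt0.
    by apply: continuous_sub; [apply: continuous_sub|apply: continuous_cst].
  by apply: continuous_add; [apply: continuous_sub|apply: continuous_cst].
have [|z [[gap_z hz] Dz]] := D_dense O _ O_open.
  by exists x; split => /=; lra.
by have := D_sep z Dz; rewrite /= in gap_z hz; lra.
Qed.

Theorem proposition4p11 (R : realType) (X : topologicalType) (A : nat -> set X) :
  (forall n, countable_sup_prop R (subsp (A n))) ->
  dense (\bigcup_n A n) ->
  countable_sup_prop R X.
Proof.
move=> csp_A A_dense S s S_cont S_n0 s_sup.
have s_cont : continuous s := s_sup.1.
have [W W_spec] := choice (fun nk : nat * nat =>
  decisive_countable_witnesses S s S_cont s_cont (A nk.1) nk.2.+1%:R^-1
    (csp_A nk.1) S_n0).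
have W_sub nk : W nk `<=` S by case: (W_spec nk).
exists (\bigcup_nk W nk); split; [|split].
- by move=> h [nk _ /W_sub].
- by apply: bigcup_countable => // nk _; case: (W_spec nk).
split; first exact: s_cont.
split=> [h [nk _ /W_sub Sh]|g g_cont g_ub x]; first exact: s_sup.2.1.
apply: le_addSinv => k; apply: (sup_le_addr s_sup g_cont) => // h Sh.
apply: (separation_of_dense A_dense s_cont g_cont (S_cont h Sh)) => z [n _ Anz].
have [_ _ W_sep] := W_spec (n, k).
have g_ub_W h' : W (n, k) h' -> forall x, h' x <= g x.
  by move=> Wh'; apply: g_ub; exists (n, k).
exact: (W_sep g g_cont g_ub_W h Sh (exist _ z (mem_set Anz))).
Qed.
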